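(* Let $f:\mathbb{R}^n\to\mathbb{R}$ be a continuously differentiable convex function. Let $D_1,\dots,D_p$ and $H_1,\dots,H_p$ be diagonal matrices, each $H_i$ with nonnegative diagonal entries, such that for each $i$, $f(y)\le f(x)+\nabla f(x)^T(y-x)+\tfrac12\|y-x\|_{H_i}^2$ for all $x,y\in\mathbb{R}^n$, and $D_i\succ H_i$. Let $(x_{k,m})_{k\ge1,\,0\le m\le p}$ be generated by the CIWHT method with $\mathcal{D}=(D_1,\dots,D_p)$. Then every limit point $\bar x$ of the sequence of iterates $(x_{k,m})_{k\ge 1,\,1\le m\le p}$ (ordered lexicographically in $(k,m)$) is $D_i$-stationary for every $i=1,\dots,p$.
   Context: $\|z\|_A^2=z^TAz$. $C_s=\{x\in\mathbb{R}^n:\|x\|_0\le s\}$ for a positive integer $s$, where $\|x\|_0$ is the number of nonzero entries. $\mathcal{P}_{C_s}(z)=\operatorname{argmin}_{y\in C_s}\|y-z\|_2^2$ (set-valued). CIWHT (Cyclic Iterative Weighted Hard Thresholding): given an initial point $x_{1,0}\in C_s$; for $k=1,2,\dots$, for $m=1,\dots,p$, pick $y_{k,m}\in\mathcal{P}_{C_s}\big(D_m^{1/2}x_{k,m-1}-D_m^{-1/2}\nabla f(x_{k,m-1})\big)$ and set $x_{k,m}=D_m^{-1/2}y_{k,m}$; then set $x_{k+1,0}=x_{k,p}$. For a diagonal $D\succ0$, a point $x\in C_s$ is $D$-stationary if $x\in D^{-1/2}\mathcal{P}_{C_s}\big(D^{1/2}x-D^{-1/2}\nabla f(x)\big)$.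 *)

From HB Require Import structures.
From mathcomp Require Import all_boot all_order all_algebra.
From mathcomp Require Import all_classical all_reals all_analysis.
Set Implicit Arguments. Unset Strict Implicit. Unset Printing Implicit Defensive.
Import Order.TTheory GRing.Theory Num.Theory.
Import numFieldNormedType.Exports.
Local Open Scope ring_scope.

Section Defs.
Variables (R : realType) (n : nat).

Definition qform (A : 'M[R]_n) (z : 'rV[R]_n) : R := (z *m A *m z^T) 0 0.

Definition dotv (u v : 'rV[R]_n) : R := (u *m v^T) 0 0.

Definition posdef (A : 'M[R]_n) : Prop := forall z : 'rV[R]_n, z != 0 -> 0 < qform A z.

Definition l0 (x : 'rV[R]_n) : nat := #|[set i : 'I_n | x 0 i != 0]|.

Definition Cs (s : nat) (x : 'rV[R]_n) : Prop := (l0 x <= s)%N.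

Definition projCs (s : nat) (z y : 'rV[R]_n) : Prop :=
  Cs s y /\ forall y' : 'rV[R]_n, Cs s y' -> dotv (y - z) (y - z) <= dotv (y' - z) (y' - z).

(* For a diagonal matrix D = diag_mx d (d with positive entries):
   D^{1/2} = diag_mx (dsqrt d), D^{-1/2} = diag_mx (dinvsqrt d). *)
Definition dsqrt (d : 'rV[R]_n) : 'rV[R]_n := map_mx Num.sqrt d.
Definition dinvsqrt (d : 'rV[R]_n) : 'rV[R]_n := map_mx (fun a => (Num.sqrt a)^-1) d.

(* x is (diag_mx d)-stationary for f with gradient g (vectors as rows, so
   D^{1/2} x is written x *m D^{1/2}) *)
Definition Dstationary (s : nat) (g : 'rV[R]_n -> 'rV[R]_n) (d : 'rV[R]_n)
    (x : 'rV[R]_n) : Prop :=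
  Cs s x /\
  exists y, projCs s (x *m diag_mx (dsqrt d) - g x *m diag_mx (dinvsqrt d)) y
            /\ x = y *m diag_mx (dinvsqrt d).

Definition seq_limit_point (u : nat -> 'rV[R]_n) (xbar : 'rV[R]_n) : Prop :=
  forall e : R, 0 < e -> forall N : nat, exists2 j : nat, (N <= j)%N & `|u j - xbar| < e.

End Defs.

(* A CIWHT step with weight D_m minimises, over C_s, the separable model
   <g x, z - x> + 1/2 ||z - x||^2_{D_m} of f around the current iterate x.  Comparing with the
   feasible candidate z = x and using the H_m upper bound on f gives sufficient decrease,
   f(x_{k,m}) <= f(x_{k,m-1}) - 1/2 ||x_{k,m} - x_{k,m-1}||^2_{D_m - H_m}.  Since f is continuous
   at the cluster point xbar, the values decrease to f(xbar) and consecutive iterates merge;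
   hence for every i there are steps with weight D_i that start and end arbitrarily close to
   xbar.  Their optimality inequalities pass to the limit, because the data of a step depend
   continuously on its end points and the support of a vector can only grow near xbar. *)

From HB Require Import structures.
From mathcomp Require Import all_boot all_order all_algebra.
From mathcomp Require Import all_classical all_reals all_analysis.
From mathcomp Require Import ring lra.
Set Implicit Arguments. Unset Strict Implicit. Unset Printing Implicit Defensive.
Import Order.TTheory GRing.Theory Num.Theory.
Import numFieldNormedType.Exports.
Local Open Scope classical_set_scope.
Local Open Scope ring_scope.

Section Coordinates.
Variables (R : realType) (n : nat).
Implicit Types (a q u w : 'rV[R]_n).

Lemma mul_diag_mxE u a j : (u *m diag_mx a) 0 j = u 0 j * a 0 j.
Proof. by rewrite mul_mx_diag mxE. Qed.

Lemma dotvE u w : dotv u w = \sum_j u 0 j * w 0 j.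
Proof. by rewrite /dotv mxE; apply: eq_bigr => j _; rewrite mxE. Qed.

Lemma qform_diagE a w : qform (diag_mx a) w = \sum_j a 0 j * w 0 j ^+ 2.
Proof.
rewrite /qform mxE; apply: eq_bigr => j _.
by rewrite mul_diag_mxE mxE mulrAC -expr2 mulrC.
Qed.

Lemma qformB (A B : 'M[R]_n) w : qform (A - B) w = qform A w - qform B w.
Proof. by rewrite /qform mulmxBr mulmxBl !mxE. Qed.

Lemma posdef_diagB_gt0 a q : posdef (diag_mx a - diag_mx q) -> forall j, 0 < a 0 j - q 0 j.
Proof.
move=> pd j; have e_neq0 : (delta_mx 0 j : 'rV[R]_n) != 0.
  by apply/negP => /eqP/matrixP/(_ 0 j); rewrite !mxE !eqxx; apply/eqP; rewrite oner_eq0.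
have := pd _ e_neq0; rewrite qformB !qform_diagE -sumrB (bigD1 j) //= big1.
  by rewrite !mxE !eqxx expr1n !mulr1 addr0.
by move=> k /negPf kj; rewrite !mxE kj expr0n !mulr0 subrr.
Qed.

Lemma l0_mul_diag u a : (forall j, a 0 j != 0) -> l0 (u *m diag_mx a) = l0 u.
Proof.
by move=> a_neq0; apply: eq_card => j; rewrite !inE mul_diag_mxE mulf_eq0 negb_or a_neq0 andbT.
Qed.

Lemma qform_diag_ge q w c : 0 <= c -> (forall j, c <= q 0 j) ->
  c * `|w| ^+ 2 <= qform (diag_mx q) w.
Proof.
move=> c_ge0 cq; rewrite qform_diagE.
have term_ge0 j : 0 <= q 0 j * w 0 j ^+ 2 by rewrite mulr_ge0 ?sqr_ge0 // (le_trans c_ge0).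
have [->|] := eqVneq `|w| 0; first by rewrite expr0n mulr0 sumr_ge0.
have -> : `|w| = mx_norm w by [].
move=> /mx_norm_neq0 [[i j] /= ->]; rewrite ord1 (bigD1 j) //= real_normK ?num_real //.
by rewrite ler_wpDr ?sumr_ge0 // ler_wpM2r ?sqr_ge0.
Qed.

Lemma near_l0_ge (X : 'rV[R]_n) : \forall u \near X, (l0 X <= l0 u)%N.
Proof.
have near_neq0 j : \forall u \near X, X 0 j != 0 -> (u : 'rV[R]_n) 0 j != 0.
  have [Xj0|Xj] := eqVneq (X 0 j) 0; first by near=> u.
  near=> u => _; apply/eqP => uj.
  suff : `|X 0 j - u 0 j| < `|X 0 j| by rewrite uj subr0 ltxx.
  near: u; apply: cvgr_dist_lt; [exact: coord_continuous | by rewrite normr_gt0].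
apply: filterS (filter_forall _ near_neq0) => u supp_le.
by apply: subset_leq_card; apply/fintype.subsetP => j; rewrite !inE; exact: supp_le.
Unshelve. all: by end_near.
Qed.

Lemma cvg_rowP (T : Type) (F : set_system T) {FF : Filter F}
    (u : T -> 'rV[R]_n) (U : 'rV[R]_n) :
  u @ F --> U <-> forall j, (fun t => u t 0 j) @ F --> U 0 j.
Proof.
split=> [uU j|uU].
  by apply: (cvg_comp _ (fun M : 'rV[R]_n => M 0 j) uU); exact: coord_continuous.
apply/cvgrPdist_lt => e e_gt0.
have close : \forall t \near F, forall j, `|U 0 j - u t 0 j| < e.
  by apply: filter_forall => j; exact: cvgr_dist_lt.
apply: filterS close => t close.
have -> : `|U - u t| = mx_norm (U - u t) by [].
rewrite mx_normrE bigmax_lt // => -[i j] _; rewrite ord1 !mxE; exact: close.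
Qed.

Lemma mul_diag_mx_continuous a : continuous (fun u : 'rV[R]_n => u *m diag_mx a).
Proof.
move=> U; apply/(@cvg_rowP _ _ (nbhs_filter U)) => j.
rewrite mul_diag_mxE; under eq_fun do rewrite mul_diag_mxE.
by apply: cvgMr_tmp; exact: coord_continuous.
Qed.

Lemma cvg_dotv (T : Type) (F : set_system T) {FF : Filter F}
    (u w : T -> 'rV[R]_n) (U W : 'rV[R]_n) :
  u @ F --> U -> w @ F --> W -> (fun t => dotv (u t) (w t)) @ F --> dotv U W.
Proof.
move=> /cvg_rowP uU /cvg_rowP wW; rewrite dotvE; under eq_fun do rewrite dotvE.
by apply: cvg_big => [|j _]; [exact: add_continuous | exact: cvgM].
Qed.

End Coordinates.

Section WeightedThresholdingStep.
Variables (R : realType) (n s : nat) (g : 'rV[R]_n -> 'rV[R]_n) (d : 'rV[R]_n).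

Definition wht_point (a : 'rV[R]_n) : 'rV[R]_n :=
  a *m diag_mx (dsqrt d) - g a *m diag_mx (dinvsqrt d).

(* [b] is a possible CIWHT update of [a] with weight [diag_mx d]; by definition,
   [Dstationary s g d x] is [Cs s x /\ wht_step x x]. *)
Definition wht_step (a b : 'rV[R]_n) : Prop :=
  exists y, projCs s (wht_point a) y /\ b = y *m diag_mx (dinvsqrt d).

Hypothesis d_gt0 : forall j, 0 < d 0 j.

Let sqrt_d_neq0 j : Num.sqrt (d 0 j) != 0.
Proof. by rewrite gt_eqF // sqrtr_gt0. Qed.

Lemma l0_mul_dsqrt (u : 'rV[R]_n) : l0 (u *m diag_mx (dsqrt d)) = l0 u.
Proof. by apply: l0_mul_diag => j; rewrite mxE. Qed.

Lemma mul_dsqrtK (u : 'rV[R]_n) : u *m diag_mx (dsqrt d) *m diag_mx (dinvsqrt d) = u.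
Proof. by apply/rowP => j; rewrite !mul_diag_mxE !mxE mulrK ?unitfE. Qed.

Lemma mul_dinvsqrtK (u : 'rV[R]_n) : u *m diag_mx (dinvsqrt d) *m diag_mx (dsqrt d) = u.
Proof. by apply/rowP => j; rewrite !mul_diag_mxE !mxE mulrVK ?unitfE. Qed.

Lemma wht_stepP a b : wht_step a b <-> projCs s (wht_point a) (b *m diag_mx (dsqrt d)).
Proof.
split=> [[y [y_proj ->]]|b_proj]; first by rewrite mul_dinvsqrtK.
by exists (b *m diag_mx (dsqrt d)); rewrite mul_dsqrtK.
Qed.

Lemma wht_step_Cs a b : wht_step a b -> Cs s b.
Proof. by move=> /wht_stepP [+ _]; rewrite /Cs l0_mul_dsqrt. Qed.

Lemma wht_point_distB a b :
  dotv (b *m diag_mx (dsqrt d) - wht_point a) (b *m diag_mx (dsqrt d) - wht_point a)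
  - dotv (a *m diag_mx (dsqrt d) - wht_point a) (a *m diag_mx (dsqrt d) - wht_point a)
  = qform (diag_mx d) (b - a) + 2 * dotv (g a) (b - a).
Proof.
rewrite !dotvE qform_diagE -sumrB mulr_sumr -big_split /=; apply: eq_bigr => j _.
rewrite /wht_point !mul_mx_diag !mxE; set S := Num.sqrt (d 0 j).
rewrite -(@sqr_sqrtr _ (d 0 j)) ?ltW // -/S.
by field; exact: sqrt_d_neq0.
Qed.

Lemma wht_step_descent (f : 'rV[R]_n -> R) (h : 'rV[R]_n) a b :
  (forall x y, f y <= f x + dotv (g x) (y - x) + 2^-1 * qform (diag_mx h) (y - x)) ->
  Cs s a -> wht_step a b ->
  f b <= f a - 2^-1 * qform (diag_mx (d - h)) (b - a).
Proof.
move=> upper_bound a_Cs /wht_stepP [_ b_opt].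
have a_Cs' : Cs s (a *m diag_mx (dsqrt d)) by rewrite /Cs l0_mul_dsqrt.
have := b_opt _ a_Cs'; rewrite -subr_le0 wht_point_distB => opt.
have := upper_bound a b; rewrite linearB qformB /=.
lra.
Qed.

Lemma wht_step_sufficient_decrease (f : 'rV[R]_n -> R) (h : 'rV[R]_n) c a b :
  0 <= c -> (forall j, c <= d 0 j - h 0 j) ->
  (forall x y, f y <= f x + dotv (g x) (y - x) + 2^-1 * qform (diag_mx h) (y - x)) ->
  Cs s a -> wht_step a b ->
  f b + c / 2 * `|b - a| ^+ 2 <= f a.
Proof.
move=> c_ge0 c_le upper_bound a_Cs ab_step.
have := wht_step_descent upper_bound a_Cs ab_step.
have c_le_dh j : c <= (d - h) 0 j by rewrite !mxE; exact: c_le.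
have := qform_diag_ge (b - a) c_ge0 c_le_dh.
lra.
Qed.

Lemma wht_point_continuous : continuous g -> continuous wht_point.
Proof.
move=> g_cont a.
apply: (@cvgB _ _ _ _ (nbhs_filter a) (fun u => u *m diag_mx (dsqrt d))
                                       (fun u => g u *m diag_mx (dinvsqrt d))).
  exact: mul_diag_mx_continuous.
apply: (cvg_comp g (fun u => u *m diag_mx (dinvsqrt d))); first exact: g_cont.
exact: mul_diag_mx_continuous.
Qed.

Lemma wht_step_closed X : continuous g ->
  (forall e, 0 < e -> exists a b, [/\ `|a - X| < e, `|b - X| < e & wht_step a b]) ->
  wht_step X X.
Proof.
move=> g_cont close_steps.
have /choice [ab ab_close] : forall k : nat, exists ab : 'rV[R]_n * 'rV[R]_n,
    [/\ `|ab.1 - X| < k.+1%:R^-1, `|ab.2 - X| < k.+1%:R^-1 & wht_step ab.1 ab.2].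
  move=> k; have [|a [b close]] := close_steps k.+1%:R^-1; first by rewrite invr_gt0.
  by exists (a, b).
have to_X (u : nat -> 'rV[R]_n) : (forall k, `|u k - X| < k.+1%:R^-1) -> u @ \oo --> X.
  move=> uX; apply/cvgrPdist_lt => e e_gt0; near=> k; rewrite distrC.
  by apply: lt_trans (uX k) _; near: k; exact: near_infty_natSinv_lt (PosNum e_gt0).
have aX : (fun k => (ab k).1) @ \oo --> X by apply: to_X => k; case: (ab_close k).
have bX : (fun k => (ab k).2) @ \oo --> X by apply: to_X => k; case: (ab_close k).
apply/wht_stepP; split=> [|y' y'_Cs].
  have [N _ N_l0] := bX _ (near_l0_ge X).
  rewrite /Cs l0_mul_dsqrt; apply: leq_trans (N_l0 N (leqnn N)) _.
  by case: (ab_close N) => _ _ /wht_step_Cs.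
have pointX : (fun k => wht_point (ab k).1) @ \oo --> wht_point X.
  by apply: (cvg_comp _ wht_point aX); exact: wht_point_continuous.
have sqrtX : (fun k => (ab k).2 *m diag_mx (dsqrt d)) @ \oo --> X *m diag_mx (dsqrt d).
  by apply: (cvg_comp _ (fun u => u *m diag_mx (dsqrt d)) bX); exact: mul_diag_mx_continuous.
apply: ler_cvg_to (cvg_dotv (cvgB sqrtX pointX) (cvgB sqrtX pointX))
  (cvg_dotv (cvgB (cvg_cst y') pointX) (cvgB (cvg_cst y') pointX)) _.
by apply: nearW => k; case: (ab_close k) => _ _ /wht_stepP [_]; apply.
Unshelve. all: by end_near.
Qed.

End WeightedThresholdingStep.

Lemma finite_pos_lower_bound (R : realType) (I : finType) (F : I -> R) :
  (forall i, 0 < F i) -> exists2 c, 0 < c & forall i, c <= F i.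
Proof.
move=> F_gt0; near (0 : R)^'+ => c; exists c; first by near: c; exact: nbhs_right_gt.
by near: c; apply: filter_forall => i; exact: nbhs_right_le.
Unshelve. all: by end_near.
Qed.

Lemma norm_walk_le (R : numDomainType) (V : normedZmodType R) (u : nat -> V) (eta : R) N :
  (forall j, (N <= j)%N -> `|u j.+1 - u j| < eta) ->
  forall J t, (N <= J)%N -> `|u (J + t)%N - u J| <= t%:R * eta.
Proof.
move=> small_steps J t NJ; elim: t => [|t IH]; first by rewrite addn0 subrr normr0 mul0r.
rewrite addnS mulrSr mulrDl mul1r [leRHS]addrC.
apply: le_trans (ler_distD (u (J + t)%N) _ _) _; rewrite lerD // ltW //.
by apply: small_steps; rewrite (leq_trans NJ) ?leq_addr.
Qed.

Lemma exists_addn_modn J p r : (r < p)%N -> exists2 t, (t < p)%N & ((J + t) %% p = r)%N.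
Proof.
move=> rp; have p_gt0 : (0 < p)%N by apply: leq_ltn_trans rp.
exists ((r + (p - J %% p)) %% p)%N; first by rewrite ltn_pmod.
rewrite modnDmr {1}(divn_eq J p) -addnA [(J %% p + _)%N]addnCA subnKC.
  by rewrite modnMDl modnDr modn_small.
exact/ltnW/ltn_pmod.
Qed.

Section ClusterPoints.
Variables (R : realType) (n : nat).

Lemma seq_limit_point_near (u : nat -> 'rV[R]_n) X (P : 'rV[R]_n -> Prop) :
  seq_limit_point u X -> (\forall y \near X, P y) -> forall N, exists2 j, (N <= j)%N & P (u j).
Proof.
move=> uX /nbhs_normP [e e_gt0 eP] N; have [j Nj uj] := uX e e_gt0 N.
by exists j => //; apply: eP; rewrite /= distrC.
Qed.

Variables (v : nat -> 'rV[R]_n) (X : 'rV[R]_n).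
Hypothesis v_cluster : seq_limit_point (fun j => v j.+1) X.

(* The decrease forces [F (v j)] down to [F X], which squeezes the steps. *)
Lemma descent_steps_vanish (F : 'rV[R]_n -> R) c : 0 < c -> {for X, continuous F} ->
  (forall j, F (v j.+1) + c * `|v j.+1 - v j| ^+ 2 <= F (v j)) ->
  forall e, 0 < e -> exists N, forall j, (N <= j)%N -> `|v j.+1 - v j| < e.
Proof.
move=> c_gt0 FX descent e e_gt0.
have Fv_noninc : nonincreasing_seq (F \o v).
  apply/nonincreasing_seqP => j /=; apply: le_trans (descent j).
  by rewrite lerDl mulr_ge0 ?sqr_ge0 ?ltW.
have FX_le j : F X <= F (v j).
  rewrite leNgt; apply/negP => FvX.
  have gap_gt0 : 0 < F X - F (v j) by rewrite subr_gt0.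
  have [k jk /= /ltr_normlP [_ FvkX]] :=
    seq_limit_point_near v_cluster (cvgr_dist_lt _ _ FX _ gap_gt0) j.
  have /= := Fv_noninc _ _ (leqW jk); lra.
have ce_gt0 : 0 < c * e ^+ 2 by rewrite mulr_gt0 ?exprn_gt0.
have [N _ /= /ltr_normlP [FvN _]] :=
  seq_limit_point_near v_cluster (cvgr_dist_lt _ _ FX _ ce_gt0) 0.
exists N.+1 => j Nj; have /= FvjN := Fv_noninc _ _ Nj.
have FXj := FX_le j.+1; have descj := descent j.
rewrite -(ltr_pXn2r (isT : 0 < 2)%N) ?nnegrE ?(ltW e_gt0) // -(ltr_pM2l c_gt0); lra.
Qed.

Lemma cluster_point_residue p r : (r < p)%N ->
  (forall e, 0 < e -> exists N, forall j, (N <= j)%N -> `|v j.+1 - v j| < e) ->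
  forall e, 0 < e -> exists j, [/\ (j %% p = r)%N, `|v j - X| < e & `|v j.+1 - X| < e].
Proof.
move=> rp steps e e_gt0; have p_gt0 : (0 < p)%N := leq_ltn_trans (leq0n r) rp.
have eta_gt0 : 0 < e / (2 * p%:R) by rewrite divr_gt0 ?mulr_gt0 ?ltr0n.
have [N small] := steps _ eta_gt0.
have e2_gt0 : 0 < e / 2 by rewrite divr_gt0.
have [J NJ vJ] := v_cluster e2_gt0 N.
have near_X t : (t <= p)%N -> `|v (J.+1 + t)%N - X| < e.
  move=> tp; have walk := norm_walk_le small t (leqW NJ).
  have walk_le : t%:R * (e / (2 * p%:R)) <= p%:R * (e / (2 * p%:R)).
    by rewrite ler_wpM2r ?ler_nat // ltW.
  have half : p%:R * (e / (2 * p%:R)) = e / 2 :> R by field; rewrite pnatr_eq0 -lt0n.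
  apply: le_lt_trans (ler_distD (v J.+1) _ _) _; lra.
have [t tp Jt] := exists_addn_modn J.+1 rp.
exists (J.+1 + t)%N; split => //; first exact/near_X/ltnW.
by rewrite -addnS; exact: near_X.
Qed.

End ClusterPoints.

Section CyclicIndex.
Local Open Scope nat_scope.

Lemma cyclic_index_succ (T : Type) (x : nat -> nat -> T) p : 0 < p ->
  (forall k, 1 <= k -> x k.+1 0 = x k p) ->
  forall j, x (j.+1 %/ p).+1 (j.+1 %% p) = x (j %/ p).+1 (j %% p).+1.
Proof.
move=> p_gt0 x_next j; rewrite modnS divnS //.
case: ifP => //= pj; rewrite add1n x_next //; congr x.
have [->|p_neq1] := eqVneq p 1; first by rewrite modn1.
by rewrite -[j in j %% p]/(j.+1.-1) modn_pred // pj prednK.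
Qed.

End CyclicIndex.

Lemma uniform_pos_lower_bound (R : realType) (I : finType) (F : nat -> I -> R) p :
  (forall m, (1 <= m <= p)%N -> forall i, 0 < F m i) ->
  exists2 c, 0 < c & forall m, (1 <= m <= p)%N -> forall i, c <= F m i.
Proof.
move=> F_gt0; have [c c_gt0 c_le] :=
  finite_pos_lower_bound (fun mi : 'I_p * I => F_gt0 mi.1.+1 (ltn_ord mi.1) mi.2).
exists c => // m /andP [m_gt0 mp] i; have mp' : (m.-1 < p)%N by rewrite prednK.
by have := c_le (Ordinal mp', i); rewrite /= prednK.
Qed.

Theorem theorem4p5 (R : realType) (n p s : nat) (hs : (0 < s)%N)
  (f : 'rV[R]_n -> R) (g : 'rV[R]_n -> 'rV[R]_n)
  (hdiff : forall x, differentiable f x)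
  (hgrad : forall x hv, 'd f x hv = dotv (g x) hv)
  (hgc : continuous g)
  (hconv : forall (x y : 'rV[R]_n) (t : R), 0 <= t <= 1 ->
     f (t *: x + (1 - t) *: y) <= t * f x + (1 - t) * f y)
  (d h : nat -> 'rV[R]_n)
  (hh : forall i, (1 <= i <= p)%N -> forall j, 0 <= h i 0 j)
  (hL : forall i, (1 <= i <= p)%N -> forall x y : 'rV[R]_n,
     f y <= f x + dotv (g x) (y - x) + 2^-1 * qform (diag_mx (h i)) (y - x))
  (hDH : forall i, (1 <= i <= p)%N -> posdef (diag_mx (d i) - diag_mx (h i)))
  (x : nat -> nat -> 'rV[R]_n)
  (hx0 : Cs s (x 1%N 0%N))
  (hstep : forall k m, (1 <= k)%N -> (1 <= m <= p)%N ->
     exists y, projCs s (x k m.-1 *m diag_mx (dsqrt (d m))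
                         - g (x k m.-1) *m diag_mx (dinvsqrt (d m))) y
               /\ x k m = y *m diag_mx (dinvsqrt (d m)))
  (hnext : forall k, (1 <= k)%N -> x k.+1 0%N = x k p)
  (xbar : 'rV[R]_n)
  (hlim : seq_limit_point (fun j => x (j %/ p).+1 (j %% p).+1) xbar) :
  forall i, (1 <= i <= p)%N -> Dstationary s g (d i) xbar.
Proof.
move=> i i_range; have /andP [i_gt0 ip] := i_range.
have p_gt0 : (0 < p)%N := leq_trans i_gt0 ip.
have dh_gt0 m (hm : (1 <= m <= p)%N) := posdef_diagB_gt0 (hDH m hm).
have d_gt0 m (hm : (1 <= m <= p)%N) j : 0 < d m 0 j.
  by have := dh_gt0 m hm j; have := hh m hm j; lra.
have [c c_gt0 c_le] := uniform_pos_lower_bound dh_gt0.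
have m_range j : (1 <= (j %% p).+1 <= p)%N by rewrite /= ltn_pmod.
(* [v] lists x_{1,0}, x_{1,1}, ... so that [fun j => v j.+1] is the sequence of [hlim]. *)
pose v j := if j is j'.+1 then x (j' %/ p).+1 (j' %% p).+1 else x 1%N 0%N.
have v_step j : wht_step s g (d (j %% p)%N.+1) (v j) (v j.+1).
  have -> : v j = x (j %/ p)%N.+1 (j %% p)%N.
    by case: j => [|j]; rewrite ?div0n ?mod0n ?cyclic_index_succ.
  exact: (hstep (j %/ p)%N.+1 (j %% p)%N.+1 isT (m_range j)).
have v_Cs j : Cs s (v j).
  by case: j => [|j]; last exact: (wht_step_Cs (d_gt0 _ (m_range j)) (v_step j)).
have v_descent j : f (v j.+1) + c / 2 * `|v j.+1 - v j| ^+ 2 <= f (v j).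
  exact: (wht_step_sufficient_decrease (d_gt0 _ (m_range j)) (ltW c_gt0) (c_le _ (m_range j))
            (hL _ (m_range j)) (v_Cs j) (v_step j)).
have steps := descent_steps_vanish hlim (divr_gt0 c_gt0 (ltr0n _ 2))
  (differentiable_continuous (hdiff xbar)) v_descent.
have xbar_step : wht_step s g (d i) xbar xbar.
  apply: (wht_step_closed (d_gt0 _ i_range) hgc) => e e_gt0.
  have [|j [jr vj vj1]] := cluster_point_residue hlim (_ : (i.-1 < p)%N) steps e_gt0.
    by rewrite prednK.
  by exists (v j), (v j.+1); split => //; move: (v_step j); rewrite jr prednK.
by split=> //; exact: (wht_step_Cs (d_gt0 _ i_range) xbar_step).
Qed.
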